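(* Let $T$ be a well-formed trace and let $e,f$ be two conflicting write events of $T$. If there exists a correctly reordered prefix of $T$ in which $e$ appears immediately before $f$, then there also exists a correctly reordered prefix of $T$ in which $f$ appears immediately before $e$.
   Context: Traces. A trace $T$ is a finite sequence of pairwise distinct events. Each event $e$ belongs to a thread $\mathrm{tid}(e)$ and is one of: a read $r(x)$ or write $w(x)$ of a shared variable $x$, or an acquire $acq(y)$ or release $rel(y)$ of a lock $y$. The projection of $T$ onto thread $i$ is the subsequence of events of thread $i$. $T$ is well-formed if a thread only acquires a lock not currently held and every release $rel(y)$ in thread $i$ has a matching earlier acquire $acq(y)$ in thread $i$ with no other acquire on $y$ in between. Two events are conflicting if they are reads/writes on the same variable, at least one is a write, and they belong to different threads. For a read $e$ on $x$, a write $f$ on $x$ is the last write of $e$ w.r.t. $T$ if $f$ precedes $e$ in $T$ and no other write on $x$ lies strictly between them. Correct reordering. $T'$ is a correctly reordered prefix of $T$ if $T'$ is a sequence of some of the events of $T$ such that: (i) for every thread $i$, the projection of $T'$ onto $i$ is a prefix of the projection of $T$ onto $i$; (ii) for every read $e$ in $T'$ whose last write w.r.t. $T$ is $f$, $f$ is in $T'$ and is also the last write of $e$ w.r.t. $T'$; (iii) for any two acquires $e_1,e_2$ on the same lock with $e_1$ before $e_2$ in $T'$, the matching release of $e_1$ is in $T'$ and lies strictly between $e_1$ and $e_2$. *)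

From HB Require Import structures.
From mathcomp Require Import all_boot.
Set Implicit Arguments. Unset Strict Implicit. Unset Printing Implicit Defensive.

Inductive op : Type :=
| Read of nat | Write of nat | Acq of nat | Rel of nat.

Definition op_eq_dec : forall a b : op, {a = b} + {a <> b}.
Proof. decide equality; apply: eq_comparable. Defined.
HB.instance Definition _ := hasDecEq.Build op (compareP op_eq_dec).

(* An event: a unique identifier (so that several events with the same thread
   and operation can be distinct), its thread, and its operation. *)
Record event : Type := Event { eid : nat; tid : nat; eop : op }.

Definition event_eq_dec : forall a b : event, {a = b} + {a <> b}.
Proof. decide equality; try apply: eq_comparable; apply op_eq_dec. Defined.
HB.instance Definition _ := hasDecEq.Build event (compareP event_eq_dec).

Definition trace := seq event.

Definition is_read (e : event) x := eop e == Read x.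
Definition is_write (e : event) x := eop e == Write x.
Definition is_acq (e : event) y := eop e == Acq y.
Definition is_rel (e : event) y := eop e == Rel y.
Definition is_access (e : event) x := is_read e x || is_write e x.

Definition before (s : trace) (e f : event) :=
  [&& e \in s, f \in s & index e s < index f s].

Definition proj (s : trace) (i : nat) : trace := [seq e <- s | tid e == i].

Definition held (P : trace) (y : nat) : Prop :=
  exists j, j < size P /\ is_acq (nth (Event 0 0 (Read 0)) P j) y /\
    forall m, j < m < size P -> ~~ is_rel (nth (Event 0 0 (Read 0)) P m) y.

Definition well_formed (T : trace) : Prop :=
  let ev k := nth (Event 0 0 (Read 0)) T k in
  [/\ uniq T,
      (forall k y, k < size T -> is_acq (ev k) y -> ~ held (take k T) y) &
      (forall k y, k < size T -> is_rel (ev k) y ->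
         exists j, [/\ j < k, is_acq (ev j) y, tid (ev j) = tid (ev k) &
                    forall m, j < m < k -> ~~ is_acq (ev m) y])].

Definition conflicting (e f : event) : Prop :=
  exists x, [/\ is_access e x, is_access f x, is_write e x || is_write f x
              & tid e != tid f].

Definition last_write (s : trace) (e f : event) : Prop :=
  exists x, [/\ is_read e x, is_write f x, before s f e &
    forall g, before s f g -> before s g e -> ~~ is_write g x].

Definition matching_release (T : trace) (a r : event) : Prop :=
  exists y, [/\ is_acq a y, is_rel r y, tid r = tid a, before T a r &
    forall g, before T a g -> before T g r -> tid g = tid a -> ~~ is_rel g y].

Definition correctly_reordered_prefix (T T' : trace) : Prop :=
  [/\ uniq T', {subset T' <= T},
      (forall i, prefix (proj T' i) (proj T i)),
      (forall e f, e \in T' -> last_write T e f -> f \in T' /\ last_write T' e f) &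
      (forall e1 e2 y, is_acq e1 y -> is_acq e2 y -> before T' e1 e2 ->
         exists r, [/\ matching_release T e1 r, r \in T',
                       before T' e1 r & before T' r e2])].

Definition imm_before (s : trace) (e f : event) := infix [:: e; f] s.

From mathcomp Require Import all_boot.

(* Let T' = P ++ e :: f :: Q be a correctly reordered prefix of T.  We show
   that P ++ [:: f; e] is again a correctly reordered prefix of T.  The
   argument only uses that e and f belong to different threads and that
   neither of them is a read or an acquire, so it is carried out in a
   section for two arbitrary such events a, b.
   - Truncating after the pair and swapping it keeps every thread projection
     a prefix of the old one, because a and b lie in different threads.
   - Every read and every acquire of P ++ [:: b; a] lies in P, and the
     relation "before" among events whose later one lies in P is the same in
     P, in P ++ [:: b; a] and in T'.  Hence the last-write condition (ii) and
     the lock condition (iii) transfer verbatim from T' to P ++ [:: b; a]. *)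

Lemma before_catl (P S : trace) (h g : event) :
  g \in P -> before (P ++ S) h g = before P h g.
Proof.
move=> gP; rewrite /before !mem_cat gP !index_cat gP /=.
case hP: (h \in P) => //=; apply/negbTE/negP => /andP [_].
have gsize : index g P < size P by rewrite index_mem.
by rewrite ltnNge (leq_trans (ltnW gsize) (leq_addr _ _)).
Qed.

Lemma before_mem {s : trace} {h g : event} : before s h g -> h \in s.
Proof. by case/and3P. Qed.

Section SwapAdjacent.

Variables (T P Q : trace) (a b : event).
Hypothesis tid_ab : tid a != tid b.
Hypothesis a_not_read : forall z, ~~ is_read a z.
Hypothesis b_not_read : forall z, ~~ is_read b z.
Hypothesis a_not_acq : forall y, ~~ is_acq a y.
Hypothesis b_not_acq : forall y, ~~ is_acq b y.

Lemma mem_swapped (g : event) :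
  g \in P ++ [:: b; a] -> g != a -> g != b -> g \in P.
Proof. by rewrite mem_cat !inE => /or3P [//|/eqP->|/eqP->]; rewrite eqxx. Qed.

Lemma read_in_prefix {g : event} {z : nat} :
  g \in P ++ [:: b; a] -> is_read g z -> g \in P.
Proof.
move=> gS rg; apply: mem_swapped => //; apply/eqP => gE.
- by move: (a_not_read z); rewrite -gE rg.
- by move: (b_not_read z); rewrite -gE rg.
Qed.

Lemma acq_in_prefix {g : event} {y : nat} :
  g \in P ++ [:: b; a] -> is_acq g y -> g \in P.
Proof.
move=> gS ag; apply: mem_swapped => //; apply/eqP => gE.
- by move: (a_not_acq y); rewrite -gE ag.
- by move: (b_not_acq y); rewrite -gE ag.
Qed.

(* Condition (i): the thread projections shrink, since a, b are in
   different threads and so each projection sees at most one of them. *)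
Lemma proj_swapped (i : nat) :
  prefix (proj (P ++ [:: b; a]) i) (proj (P ++ a :: b :: Q) i).
Proof.
rewrite /proj !filter_cat /=.
have pre1 (s t : trace) (z : event) : prefix (s ++ [:: z]) (s ++ z :: t).
  by rewrite -(cat1s z t) catA prefix_prefix.
case: eqP => [ai|_]; case: eqP => [bi|_] /=.
- by move: tid_ab; rewrite ai bi eqxx.
- exact: pre1.
- exact: pre1.
- by rewrite cats0 prefix_prefix.
Qed.

Hypothesis crp : correctly_reordered_prefix T (P ++ a :: b :: Q).

Lemma uniq_swapped : uniq (P ++ [:: b; a]).
Proof.
case: crp; rewrite !cat_uniq /= !inE !negb_or.
by case/and5P => -> /and3P [-> -> _] /andP [ba _] *; rewrite eq_sym ba.
Qed.

Lemma sub_swapped : {subset P ++ [:: b; a] <= T}.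
Proof.
case: crp => _ sub *; move=> g gS; apply: sub; move: gS.
by rewrite !mem_cat !inE => /or3P [->|->|->]; rewrite ?orbT.
Qed.

(* Condition (ii): reads lie in P, and so do their last writes. *)
Lemma last_write_swapped (g h : event) :
  g \in P ++ [:: b; a] -> last_write T g h ->
  h \in P ++ [:: b; a] /\ last_write (P ++ [:: b; a]) g h.
Proof.
case: crp => _ _ _ lw _ gS lwT; have [z [rg _ _ _]] := lwT.
have gP := read_in_prefix gS rg.
have gT' : g \in P ++ a :: b :: Q by rewrite mem_cat gP.
have [_ [z' [rg' wh bhg nw]]] := lw g h gT' lwT.
rewrite before_catl // in bhg; have hP := before_mem bhg.
split; first by rewrite mem_cat hP.
exists z'; split; rewrite ?before_catl // => k bhk bkg.
rewrite before_catl // in bkg; have kP := before_mem bkg.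
by apply: nw; rewrite before_catl //; rewrite before_catl in bhk.
Qed.

(* Condition (iii): acquires lie in P, and so do matching releases. *)
Lemma lock_swapped (e1 e2 : event) (y : nat) :
  is_acq e1 y -> is_acq e2 y -> before (P ++ [:: b; a]) e1 e2 ->
  exists r, [/\ matching_release T e1 r, r \in P ++ [:: b; a],
             before (P ++ [:: b; a]) e1 r & before (P ++ [:: b; a]) r e2].
Proof.
case: crp => _ _ _ _ lk a1 a2 b12.
have [_ e2S _] := and3P b12; have e2P := acq_in_prefix e2S a2.
rewrite before_catl // in b12.
have b12' : before (P ++ a :: b :: Q) e1 e2 by rewrite before_catl.
have [r [mr _ b1r br2]] := lk e1 e2 y a1 a2 b12'.
rewrite before_catl // in br2; have rP := before_mem br2.
exists r; split; rewrite ?mem_cat ?rP ?before_catl //.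
by rewrite before_catl in b1r.
Qed.

Lemma crp_swapped : correctly_reordered_prefix T (P ++ [:: b; a]).
Proof.
split; [exact: uniq_swapped | exact: sub_swapped | | exact: last_write_swapped
       | exact: lock_swapped].
by move=> i; case: crp => _ _ pre _ _; apply: prefix_trans (proj_swapped i) _.
Qed.

End SwapAdjacent.

Theorem mainTheorem9 (T : trace) (e f : event) (x : nat) :
  well_formed T -> e \in T -> f \in T ->
  is_write e x -> is_write f x -> conflicting e f ->
  (exists T', correctly_reordered_prefix T T' /\ imm_before T' e f) ->
  exists T', correctly_reordered_prefix T T' /\ imm_before T' f e.
Proof.
move=> _ _ _ /eqP we /eqP wf [_ [_ _ _ tef]] [T' [crp /infixP [P [Q defT']]]].
exists (P ++ [:: f; e]); split; last by apply/infixP; exists P, [::]; rewrite cats0.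
apply: (@crp_swapped T P Q) => // [z|z|y|y|]; rewrite /is_read /is_acq ?we ?wf //.
by rewrite -defT'.
Qed.
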